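(* For any American option $\xi$, \[ \{x\in\mathbb{R}^d : \exists Y\in\Phi^{\mathrm{ag}}(\xi),\ x=Y_0\}=\{x\in\mathbb{R}^d:\exists y\in\Phi^{\mathrm{ad}}(\xi),\ x=y_0\}. \]
   Context: Finite filtered probability space $(\Omega,\mathcal{F},\mathbb{P};(\mathcal{F}_t)_{t=0}^T)$ with $\mathcal{F}_0$ trivial, $\mathcal{F}_T=2^\Omega$, $\mathbb{P}(\{\omega\})>0$. $\mathcal{L}_t$: $\mathcal{F}_t$-measurable $\mathbb{R}^d$-valued random variables. $d$ assets with $\mathcal{F}_t$-measurable exchange rates $\pi^{jk}_t>0$, $\pi^{jj}_t=1$. Solvency cone $\mathcal{K}_t$: the set of $x\in\mathcal{L}_t$ with $x(\omega)$ in the convex cone generated by $e^1,\ldots,e^d$ and $\pi^{jk}_t(\omega)e^j-e^k$ for every $\omega$. Deferred solvency cone $\mathcal{Q}_t$: the set of $z\in\mathcal{L}_t$ for which there exist $y_{t+1},\ldots,y_{T+1}$, $y_s\in\mathcal{L}_{s-1}$, $y_{T+1}=0$, with $z-y_{t+1}\in\mathcal{K}_t$ and $y_s-y_{s+1}\in\mathcal{K}_s$ for $s=t+1,\ldots,T$. A trading strategy is $y=(y_t)_{t=0}^{T+1}$ with $y_0\in\mathbb{R}^d$, $y_t\in\mathcal{L}_{t-1}$ for $t=1,\ldots,T$, $y_{T+1}=0$; $\Phi$ is the set of trading strategies. A mixed stopping time is an adapted $[0,1]$-valued process $\chi=(\chi_t)_{t=0}^T$ with $\sum_{t=0}^T\chi_t=1$;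 $\mathcal{X}$ is the set of them. $\mathcal{T}$ is the set of stopping times with values in $\{0,\ldots,T\}$. An American option is an adapted $\mathbb{R}^d$-valued process $\xi=(\xi_t)_{t=0}^T$. $\Phi^{\mathrm{ag}}(\xi)$ is the set of maps $Y:\mathcal{X}\to\Phi$, $\chi\mapsto Y^\chi$, such that (i) $Y^\chi_t-\chi_t\xi_t-Y^\chi_{t+1}\in\mathcal{K}_t$ for all $\chi\in\mathcal{X}$ and $t=0,\ldots,T$; (ii) for all $\chi,\chi'\in\mathcal{X}$, $t$ and $\omega$: if $\chi_s(\omega)=\chi'_s(\omega)$ for $s=0,\ldots,t-1$ then $Y^\chi_t(\omega)=Y^{\chi'}_t(\omega)$. In particular $Y^\chi_0$ does not depend on $\chi$; it is denoted $Y_0$. $\Phi^{\mathrm{ad}}(\xi)$ is the set of $y\in\Phi$ such that for all $\tau\in\mathcal{T}$: $y_t-y_{t+1}\in\mathcal{Q}_t$ for $t=0,\ldots,\tau-1$ and $y_\tau-\xi_\tau\in\mathcal{Q}_\tau$. Standing assumption: the model admits no arbitrage (no $y\in\Phi$ with $y_0=0$, $y_t-y_{t+1}\in\mathcal{K}_t$ for $t<T$, and $y_T-x\in\mathcal{K}_T$ for some nonzero componentwise non-negative $x\in\mathcal{L}_T$). *)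

From HB Require Import structures.
From mathcomp Require Import all_boot all_order all_algebra.
From mathcomp Require Import reals.
Set Implicit Arguments.
Unset Strict Implicit.
Unset Printing Implicit Defensive.
Import Order.TTheory GRing.Theory Num.Theory.
Local Open Scope ring_scope.

Section Model.
Variables (R : realType) (Omega : finType) (d : nat).

Definition unitv (j : 'I_d) : 'rV[R]_d := delta_mx 0 j.

(* A finite algebra (= sigma-algebra, Omega finite) of events. *)
Definition is_algebra (A : {set {set Omega}}) : Prop :=
  [/\ setT \in A,
      (forall B, B \in A -> ~: B \in A) &
      (forall B C, B \in A -> C \in A -> B :|: C \in A)].

Definition filtration (T : nat) (F : nat -> {set {set Omega}}) : Prop :=
  [/\ (forall t, (t <= T)%N -> is_algebra (F t)),
      (forall s t, (s <= t)%N -> (t <= T)%N -> F s \subset F t),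
      F 0%N = [set set0; setT] &
      F T = powerset setT].

Definition full_support_prob (P : Omega -> R) : Prop :=
  (forall w, 0 < P w) /\ \sum_(w : Omega) P w = 1.

Definition meas (G : {set {set Omega}}) (X : Omega -> 'rV[R]_d) : Prop :=
  forall v : 'rV[R]_d, [set w | X w == v] \in G.
Definition meas_sc (G : {set {set Omega}}) (c : Omega -> R) : Prop :=
  forall r : R, [set w | c w == r] \in G.

Definition adapted (T : nat) (F : nat -> {set {set Omega}})
  (xi : nat -> Omega -> 'rV[R]_d) : Prop :=
  forall t, (t <= T)%N -> meas (F t) (xi t).

Definition exchange_rates (T : nat) (F : nat -> {set {set Omega}})
  (pi : nat -> Omega -> 'I_d -> 'I_d -> R) : Prop :=
  forall t, (t <= T)%N ->
    [/\ (forall w j k, 0 < pi t w j k),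
        (forall w j, pi t w j j = 1) &
        (forall j k, meas_sc (F t) (fun w => pi t w j k))].

Definition in_solv_cone (p : 'I_d -> 'I_d -> R) (x : 'rV[R]_d) : Prop :=
  exists (a : 'I_d -> R) (b : 'I_d -> 'I_d -> R),
    [/\ (forall j, 0 <= a j), (forall j k, 0 <= b j k) &
        x = \sum_(j < d) a j *: unitv j
            + \sum_(j < d) \sum_(k < d) b j k *: (p j k *: unitv j - unitv k)].

Variables (T : nat) (F : nat -> {set {set Omega}})
          (pi : nat -> Omega -> 'I_d -> 'I_d -> R).

Definition Kset (t : nat) (x : Omega -> 'rV[R]_d) : Prop :=
  meas (F t) x /\ forall w, in_solv_cone (pi t w) (x w).

Definition Qset (t : nat) (z : Omega -> 'rV[R]_d) : Prop :=
  meas (F t) z /\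
  exists y : nat -> Omega -> 'rV[R]_d,
    [/\ (forall s, (t < s)%N -> (s <= T.+1)%N -> meas (F s.-1) (y s)),
        (forall w, y T.+1 w = 0),
        Kset t (fun w => z w - y t.+1 w) &
        (forall s, (t < s)%N -> (s <= T)%N -> Kset s (fun w => y s w - y s.+1 w))].

Definition strategy (y : nat -> Omega -> 'rV[R]_d) : Prop :=
  [/\ (forall w w', y 0%N w = y 0%N w'),
      (forall t, (1 <= t)%N -> (t <= T)%N -> meas (F t.-1) (y t)) &
      (forall t w, (T < t)%N -> y t w = 0)].

Definition mixed_stop (chi : nat -> Omega -> R) : Prop :=
  [/\ (forall t, (t <= T)%N -> meas_sc (F t) (chi t)),
      (forall t w, (t <= T)%N -> 0 <= chi t w <= 1),
      (forall w, \sum_(t < T.+1) chi t w = 1) &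
      (forall t w, (T < t)%N -> chi t w = 0)].

Definition stopping_time (tau : Omega -> nat) : Prop :=
  (forall w, (tau w <= T)%N) /\
  (forall t, (t <= T)%N -> [set w | tau w == t] \in F t).

Definition no_arbitrage : Prop :=
  ~ exists y : nat -> Omega -> 'rV[R]_d,
      [/\ strategy y,
          (forall w, y 0%N w = 0),
          (forall t, (t < T)%N -> Kset t (fun w => y t w - y t.+1 w)) &
          exists x : Omega -> 'rV[R]_d,
            [/\ meas (F T) x,
                (forall w j, 0 <= x w 0 j),
                (exists w, x w != 0) &
                Kset T (fun w => y T w - x w)]].

Variable xi : nat -> Omega -> 'rV[R]_d.

(* Phi^ag(xi): maps chi |-> Y^chi (only their values on mixed stopping
   times matter). *)
Definition Phi_ag (Y : (nat -> Omega -> R) -> nat -> Omega -> 'rV[R]_d) : Prop :=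
  [/\ (forall chi, mixed_stop chi -> strategy (Y chi)),
      (forall chi, mixed_stop chi -> forall t, (t <= T)%N ->
          Kset t (fun w => Y chi t w - chi t w *: xi t w - Y chi t.+1 w)) &
      (forall chi chi', mixed_stop chi -> mixed_stop chi' ->
          forall t w, (t <= T.+1)%N ->
            (forall s, (s < t)%N -> chi s w = chi' s w) ->
            Y chi t w = Y chi' t w)].

(* Phi^ad(xi): the conditions "y_t - y_{t+1} in Q_t for t < tau" and
   "y_tau - xi_tau in Q_tau" are read on the F_t-measurable events
   {t < tau} and {tau = t} respectively, i.e. via indicator multiplication. *)
Definition Phi_ad (y : nat -> Omega -> 'rV[R]_d) : Prop :=
  strategy y /\
  forall tau, stopping_time tau -> forall t, (t <= T)%N ->
    Qset t (fun w => if (t < tau w)%N then y t w - y t.+1 w else 0) /\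
    Qset t (fun w => if tau w == t then y t w - xi t w else 0).

End Model.

From HB Require Import structures.
From mathcomp Require Import all_boot all_order all_algebra.
From mathcomp Require Import reals.
From mathcomp Require Import boolp zify ring.
Import Order.TTheory GRing.Theory Num.Theory.
Local Open Scope ring_scope.
Set Implicit Arguments.
Unset Strict Implicit.
Unset Printing Implicit Defensive.

(* Given Y in Phi^ag, the strategy y := Y^chi for chi the stopping time T lies in Phi^ad:
   Y^tau agrees with y before a stopping time tau, so on {t < tau} the increment
   y_t - y_{t+1} is already solvent, while on {tau = t} the remainder of Y^tau after t
   liquidates y_t - xi_t.  Conversely, for y in Phi^ad choose liquidations U^r of
   y_r - xi_r and V^r of y_r - y_{r+1} and set
     Y^chi_t = c_t y_t + sum_{r<t} (chi_r U^r_t + c_{r+1} V^r_t),  c_t = 1 - sum_{s<t} chi_s;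
   as chi_r, c_r >= 0, every increment of Y^chi is a conic combination of solvent
   increments, and Y^chi_t only depends on chi_0, ..., chi_{t-1}.  Neither the probability,
   the properties of the exchange rates nor the absence of arbitrage play a role. *)

Section FiniteAlgebra.
Variables (Omega : finType) (G : {set {set Omega}}).
Hypothesis hG : is_algebra G.

Lemma algebraT : setT \in G.
Proof. by case: hG. Qed.

Lemma algebraC B : B \in G -> ~: B \in G.
Proof. by case: hG => _ hC _; apply: hC. Qed.

Lemma algebraU B C : B \in G -> C \in G -> B :|: C \in G.
Proof. by case: hG => _ _; apply. Qed.

Lemma algebra0 : set0 \in G.
Proof. by rewrite -setCT; apply/algebraC/algebraT. Qed.

Lemma algebraI B C : B \in G -> C \in G -> B :&: C \in G.
Proof.
by move=> hB hC; rewrite -[B :&: C]setCK setCI; apply/algebraC/algebraU; apply: algebraC.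
Qed.

Lemma algebra_bigcup (I : finType) (P : pred I) (A : I -> {set Omega}) :
  (forall i, P i -> A i \in G) -> \bigcup_(i | P i) A i \in G.
Proof.
by move=> hA; apply: (big_ind (fun B => B \in G)) => //; [exact: algebra0 | exact: algebraU].
Qed.

Lemma algebra_cst (b : bool) : [set _ : Omega | b] \in G.
Proof.
case: b; first by rewrite (_ : [set _ | true] = setT) ?algebraT //; apply/setP=> w; rewrite !inE.
by rewrite (_ : [set _ | false] = set0) ?algebra0 //; apply/setP=> w; rewrite !inE.
Qed.

(* [meas] and [meas_sc] are the instances of [measurable_in] at ['rV[R]_d] and [R]. *)
Definition measurable_in (A : eqType) (X : Omega -> A) : Prop :=
  forall a, [set w | X w == a] \in G.

Lemma measurable_in_cst (A : eqType) (c : A) : measurable_in (fun _ => c).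
Proof. by move=> a; apply: algebra_cst. Qed.

Lemma eq_measurable_in (A : eqType) (X Y : Omega -> A) :
  X =1 Y -> measurable_in X -> measurable_in Y.
Proof.
by move=> eXY hX a; rewrite (_ : [set w | Y w == a] = [set w | X w == a]) //;
  apply/setP=> w; rewrite !inE eXY.
Qed.

(* The level set of f (X, Y) is a finite union of intersections of level sets of X and Y. *)
Lemma measurable_in_comp2 (A B C : eqType) (f : A -> B -> C) X Y :
  measurable_in X -> measurable_in Y -> measurable_in (fun w => f (X w) (Y w)).
Proof.
move=> hX hY c.
rewrite (_ : [set w | _ == c] = \bigcup_(w' | f (X w') (Y w') == c)
                                 ([set w | X w == X w'] :&: [set w | Y w == Y w'])).
  by apply: algebra_bigcup => w' _; apply: algebraI.
apply/setP=> w; rewrite inE; apply/idP/bigcupP; first by exists w; rewrite ?inE ?eqxx.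
by case=> w' fc; rewrite !inE => /andP[/eqP -> /eqP ->].
Qed.

Lemma measurable_in_comp (A C : eqType) (f : A -> C) X :
  measurable_in X -> measurable_in (fun w => f (X w)).
Proof. by move=> hX; apply: (measurable_in_comp2 (fun a (_ : A) => f a)). Qed.

Lemma measurable_in_bool (b : Omega -> bool) : [set w | b w] \in G -> measurable_in b.
Proof.
move=> hb [].
  by rewrite (_ : [set w | b w == true] = [set w | b w]) //; apply/setP=> w; rewrite !inE eqb_id.
rewrite (_ : [set w | b w == false] = ~: [set w | b w]); first exact: algebraC.
by apply/setP=> w; rewrite !inE eqbF_neg.
Qed.

Lemma measurable_inD (V : zmodType) (X Y : Omega -> V) :
  measurable_in X -> measurable_in Y -> measurable_in (fun w => X w + Y w).
Proof. exact: (measurable_in_comp2 (fun a b : V => a + b)). Qed.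

Lemma measurable_inB (V : zmodType) (X Y : Omega -> V) :
  measurable_in X -> measurable_in Y -> measurable_in (fun w => X w - Y w).
Proof. exact: (measurable_in_comp2 (fun a b : V => a - b)). Qed.

Lemma measurable_inZ (K : pzRingType) (V : lmodType K) (c : Omega -> K) (X : Omega -> V) :
  measurable_in c -> measurable_in X -> measurable_in (fun w => c w *: X w).
Proof. exact: (measurable_in_comp2 (fun (a : K) (v : V) => a *: v)). Qed.

Lemma measurable_in_mask (V : zmodType) (b : Omega -> bool) (X : Omega -> V) :
  measurable_in b -> measurable_in X -> measurable_in (fun w => if b w then X w else 0).
Proof. exact: (measurable_in_comp2 (fun (c : bool) (v : V) => if c then v else 0)). Qed.

Lemma measurable_in_sum (V : zmodType) n (X : nat -> Omega -> V) :
  (forall r, (r < n)%N -> measurable_in (X r)) ->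
  measurable_in (fun w => \sum_(r < n) X r w).
Proof.
elim: n => [|n IH] hX.
  apply: (eq_measurable_in (X := fun _ => 0)) => [w|]; first by rewrite big_ord0.
  exact: measurable_in_cst.
apply: (eq_measurable_in (X := fun w => \sum_(r < n) X r w + X n w)).
  by move=> w; rewrite big_ord_recr.
by apply: measurable_inD; [apply: IH => r /ltnW; apply: hX | apply: hX].
Qed.

End FiniteAlgebra.

Lemma measurable_in_subset (Omega : finType) (A : eqType) (G G' : {set {set Omega}})
  (X : Omega -> A) : G \subset G' -> measurable_in G X -> measurable_in G' X.
Proof. by move=> /subsetP sGG' hX a; apply: sGG'. Qed.

Section SolvencyCone.
Variables (R : realType) (d : nat) (p : 'I_d -> 'I_d -> R).

Lemma solv_cone0 : in_solv_cone p 0.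
Proof.
exists (fun _ => 0), (fun _ _ => 0); split => //.
by rewrite !big1 ?addr0 // => j _; rewrite ?big1 // => *; rewrite scale0r.
Qed.

Lemma solv_coneD x y : in_solv_cone p x -> in_solv_cone p y -> in_solv_cone p (x + y).
Proof.
case=> a [b [ha hb ->]] [a' [b' [ha' hb' ->]]].
exists (fun j => a j + a' j), (fun j k => b j k + b' j k); split.
- by move=> j; rewrite addr_ge0.
- by move=> j k; rewrite addr_ge0.
rewrite addrACA; congr (_ + _); rewrite -big_split; apply: eq_bigr => j _.
  by rewrite scalerDl.
by rewrite -big_split; apply: eq_bigr => k _; rewrite scalerDl.
Qed.

Lemma solv_coneZ c x : 0 <= c -> in_solv_cone p x -> in_solv_cone p (c *: x).
Proof.
move=> hc [a [b [ha hb ->]]].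
exists (fun j => c * a j), (fun j k => c * b j k); split.
- by move=> j; rewrite mulr_ge0.
- by move=> j k; rewrite mulr_ge0.
rewrite scalerDr !scaler_sumr; congr (_ + _); apply: eq_bigr => j _.
  by rewrite scalerA.
by rewrite scaler_sumr; apply: eq_bigr => k _; rewrite scalerA.
Qed.

Lemma solv_cone_sum n (x : 'I_n -> 'rV[R]_d) :
  (forall r, in_solv_cone p (x r)) -> in_solv_cone p (\sum_(r < n) x r).
Proof.
by move=> hx; apply: (big_ind (in_solv_cone p)) => //; [exact: solv_cone0 | exact: solv_coneD].
Qed.

End SolvencyCone.

Section Filtration.
Variables (Omega : finType) (T : nat) (F : nat -> {set {set Omega}}).
Hypothesis hF : filtration T F.

Lemma filtration_algebra t : (t <= T)%N -> is_algebra (F t).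
Proof. by case: hF => h _ _ _; apply: h. Qed.

Lemma filtration_subset s t : (s <= t)%N -> (t <= T)%N -> F s \subset F t.
Proof. by case: hF => _ hsub _ _; apply: hsub. Qed.

Lemma measurable_in_filtration (A : eqType) s t (X : Omega -> A) :
  (s <= t)%N -> (t <= T)%N -> measurable_in (F s) X -> measurable_in (F t) X.
Proof. by move=> st tT; apply/measurable_in_subset/filtration_subset. Qed.

Lemma stopping_time_cst r : (r <= T)%N -> stopping_time T F (fun _ => r).
Proof. by move=> rT; split=> // t tT; apply/algebra_cst/filtration_algebra. Qed.

Lemma measurable_in_stopping_eq tau s t :
  stopping_time T F tau -> (s <= t)%N -> (t <= T)%N ->
  measurable_in (F t) (fun w => tau w == s).
Proof.
move=> [_ hev] st tT; apply/(measurable_in_filtration st tT)/measurable_in_bool.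
  exact/filtration_algebra/(leq_trans st).
exact/hev/(leq_trans st).
Qed.

Lemma measurable_in_stopping_lt tau t :
  stopping_time T F tau -> (t <= T)%N -> measurable_in (F t) (fun w => (t < tau w)%N).
Proof.
move=> htau tT; have hFt := filtration_algebra tT.
apply: (eq_measurable_in (X := fun w => ~~ [exists s : 'I_t.+1, tau w == s])).
  move=> w; rewrite ltnNge; congr (~~ _); apply/existsP/idP => [[s /eqP ->] | le_tau_t].
    by rewrite -ltnS.
  by exists (Ordinal (le_tau_t : (tau w < t.+1)%N)).
apply: (measurable_in_comp hFt negb); apply: (measurable_in_bool hFt).
rewrite (_ : [set w | _] = \bigcup_(s < t.+1) [set w | tau w == s]).
  apply: algebra_bigcup => // s _; have st : (s <= t)%N := ltn_ord s.
  by apply: (subsetP (filtration_subset st tT)); apply/htau.2/(leq_trans st).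
apply/setP=> w; rewrite inE; apply/existsP/bigcupP => [[s hs] | [s _]].
  by exists s; rewrite ?inE.
by rewrite inE; exists s.
Qed.

End Filtration.

Section Model.
Variables (R : realType) (Omega : finType) (d T : nat) (F : nat -> {set {set Omega}})
          (pi : nat -> Omega -> 'I_d -> 'I_d -> R).
Hypothesis hF : filtration T F.

Lemma strategy_measurable (y : nat -> Omega -> 'rV[R]_d) s t :
  strategy T F y -> (s <= t.+1)%N -> (t <= T)%N -> measurable_in (F t) (y s).
Proof.
move=> [y0_cst y_meas y_end] st tT.
case: s st => [|s] st.
  move=> a; rewrite (_ : [set w | _] = [set _ | [exists w', y 0%N w' == a]]).
    exact: (algebra_cst (filtration_algebra hF tT)).
  apply/setP=> w; rewrite !inE; apply/idP/existsP => [|[w']]; first by exists w.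
  by rewrite (y0_cst w w').
have [sT | Ts] := ltnP s T.
  by apply: (measurable_in_filtration hF (s := s)) => //; apply: y_meas.
apply: (eq_measurable_in (X := fun=> 0)) => [w|]; first by rewrite y_end.
exact: (measurable_in_cst (filtration_algebra hF tT)).
Qed.

Lemma Qset_restrict t (b : Omega -> bool) (z : Omega -> 'rV[R]_d)
    (u : nat -> Omega -> 'rV[R]_d) :
  (t <= T)%N -> measurable_in (F t) b -> measurable_in (F t) z ->
  (forall s, (t < s)%N -> (s <= T.+1)%N -> measurable_in (F s.-1) (u s)) ->
  (forall w, b w ->
     [/\ u T.+1 w = 0, in_solv_cone (pi t w) (z w - u t.+1 w) &
         forall s, (t < s)%N -> (s <= T)%N -> in_solv_cone (pi s w) (u s w - u s.+1 w)]) ->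
  Qset T F pi t (fun w => if b w then z w else 0).
Proof.
move=> tT hb hz hu hcone; have hFt := filtration_algebra hF tT.
have hbs s : (t <= s)%N -> (s <= T)%N -> measurable_in (F s) b.
  by move=> ts sT; exact: (measurable_in_filtration hF ts sT hb).
split; first exact: measurable_in_mask.
exists (fun s w => if b w then u s w else 0); split.
- move=> s ts sT1; have hs : (s.-1 <= T)%N by lia.
  by apply: (measurable_in_mask (filtration_algebra hF hs)); [apply: hbs; lia | exact: hu].
- by move=> w; case: ifP => // /hcone[].
- split.
    apply: (measurable_inB hFt); apply: (measurable_in_mask hFt) => //.
    exact: (hu t.+1).
  by move=> w; case: ifP => [/hcone[] // | _]; rewrite subr0; apply: solv_cone0.
move=> s ts sT; have hFs := filtration_algebra hF sT; split.
  apply: (measurable_inB hFs); apply: (measurable_in_mask hFs); try by apply: hbs; lia.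
    by apply: (measurable_in_filtration hF (s := s.-1)) => //; [lia | apply: hu; lia].
  by apply: (hu s.+1); lia.
move=> w; case: ifP => [/hcone[_ _ hs] | _]; first exact: hs.
by rewrite subr0; apply: solv_cone0.
Qed.

Definition stop_indicator (tau : Omega -> nat) : nat -> Omega -> R :=
  fun s w => if tau w == s then 1 else 0.

Lemma mixed_stop_indicator tau : stopping_time T F tau -> mixed_stop T F (stop_indicator tau).
Proof.
move=> htau; have [tau_le _] := htau; split.
- move=> t tT.
  apply: (measurable_in_comp (filtration_algebra hF tT) (fun b : bool => if b then 1 else 0 : R)).
  exact: (measurable_in_stopping_eq hF htau (leqnn t) tT).
- by move=> t w _; rewrite /stop_indicator; case: ifP; rewrite ?lexx ?ler01.
- move=> w; rewrite (bigD1 (Ordinal (tau_le w : (tau w < T.+1)%N))) //= /stop_indicator eqxx.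
  by rewrite big1 ?addr0 // => s; rewrite -val_eqE /= eq_sym => /negbTE ->.
- by move=> t w Tt; rewrite /stop_indicator; case: eqP => // tau_t; move: (tau_le w); lia.
Qed.

Lemma mixed_stop_ge0 (chi : nat -> Omega -> R) s w : mixed_stop T F chi -> 0 <= chi s w.
Proof.
case=> _ chi01 _ chi_end; have [sT | Ts] := leqP s T; last by rewrite chi_end.
by have /andP[] := chi01 s w sT.
Qed.

Definition unexercised (chi : nat -> Omega -> R) t w : R := 1 - \sum_(s < t) chi s w.

Lemma unexercisedS chi t w : unexercised chi t w = unexercised chi t.+1 w + chi t w.
Proof. by rewrite /unexercised big_ord_recr /=; ring. Qed.

Lemma unexercised_end chi w : mixed_stop T F chi -> unexercised chi T.+1 w = 0.
Proof. by case=> _ _ chi1 _; rewrite /unexercised chi1 subrr. Qed.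

Lemma unexercised_ge0 chi t w : mixed_stop T F chi -> 0 <= unexercised chi t w.
Proof.
move=> mchi; have chi_ge0 s : 0 <= chi s w by apply: mixed_stop_ge0 mchi.
case: mchi => _ _ chi1 chi_end; rewrite /unexercised subr_ge0 -(chi1 w).
rewrite -!(big_mkord xpredT (chi^~ w)).
apply: (@le_trans _ _ (\sum_(0 <= s < t + T.+1) chi s w)).
  by rewrite [leRHS](big_cat_nat _ (n := t)) ?leq_addr //= lerDl sumr_ge0.
rewrite [leLHS](big_cat_nat _ (n := T.+1)) ?leq_addl //= [X in _ + X]big_nat_cond.
by rewrite [X in _ + X]big1 ?addr0 // => s /andP[/andP[Ts _] _]; apply: chi_end.
Qed.

Lemma unexercised_measurable chi t k : mixed_stop T F chi -> (t <= k.+1)%N -> (k <= T)%N ->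
  measurable_in (F k) (unexercised chi t).
Proof.
move=> [chi_meas _ _ _] tk kT; have hFk := filtration_algebra hF kT.
apply: (measurable_inB hFk); first exact: measurable_in_cst.
apply: (measurable_in_sum hFk) => s st.
by apply: (measurable_in_filtration hF (s := s)); [lia | done | apply: chi_meas; lia].
Qed.

Lemma eq_unexercised chi chi' t w : (forall s, (s < t)%N -> chi s w = chi' s w) ->
  unexercised chi t w = unexercised chi' t w.
Proof. by move=> e; congr (1 - _); apply: eq_bigr => s _; apply: e. Qed.

Variable xi : nat -> Omega -> 'rV[R]_d.
Hypothesis hxi : adapted T F xi.

Section AmericanToDeferred.
Variable Y : (nat -> Omega -> R) -> nat -> Omega -> 'rV[R]_d.
Hypothesis hY : Phi_ag T F pi xi Y.

Let chiT := stop_indicator (fun=> T).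

Let mixed_chiT : mixed_stop T F chiT.
Proof. exact/mixed_stop_indicator/stopping_time_cst. Qed.

Lemma Phi_ag_before_stop tau k w : stopping_time T F tau -> (k <= tau w)%N ->
  Y (stop_indicator tau) k w = Y chiT k w.
Proof.
move=> htau k_tau; have [_ _ Y_nonanticipative] := hY; have tau_le := htau.1 w.
apply: Y_nonanticipative; [exact: mixed_stop_indicator | exact: mixed_chiT | lia |].
by move=> s sk; rewrite /chiT /stop_indicator; do 2 case: eqP => //; lia.
Qed.

Lemma Phi_ag_continue tau t : stopping_time T F tau -> (t <= T)%N ->
  Qset T F pi t (fun w => if (t < tau w)%N then Y chiT t w - Y chiT t.+1 w else 0).
Proof.
move=> htau tT; have hFt := filtration_algebra hF tT.
have [Y_strategy Y_solvent _] := hY; have yT_strategy := Y_strategy _ mixed_chiT.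
apply: (Qset_restrict (u := fun _ _ => 0)) => //.
- exact: (measurable_in_stopping_lt hF htau tT).
- by apply: (measurable_inB hFt); apply: (strategy_measurable yT_strategy).
- by move=> s ts sT1; apply: measurable_in_cst; apply: (filtration_algebra hF); lia.
move=> w t_tau; split => // [|s _ _]; rewrite subr0; last exact: solv_cone0.
rewrite -(Phi_ag_before_stop htau (ltnW t_tau)) -(Phi_ag_before_stop htau t_tau).
have [_] := Y_solvent _ (mixed_stop_indicator htau) t tT; move/(_ w).
by rewrite /stop_indicator gtn_eqF // scale0r subr0.
Qed.

Lemma Phi_ag_exercise tau t : stopping_time T F tau -> (t <= T)%N ->
  Qset T F pi t (fun w => if tau w == t then Y chiT t w - xi t w else 0).
Proof.
move=> htau tT; have hFt := filtration_algebra hF tT.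
have [Y_strategy Y_solvent _] := hY; have mtau := mixed_stop_indicator htau.
have yT_strategy := Y_strategy _ mixed_chiT; have ytau_strategy := Y_strategy _ mtau.
apply: (Qset_restrict (u := Y (stop_indicator tau))) => //.
- exact: (measurable_in_stopping_eq hF htau (leqnn t) tT).
- by apply: (measurable_inB hFt); [apply: (strategy_measurable yT_strategy) | apply: hxi].
- by move=> s ts sT1; apply: (strategy_measurable ytau_strategy); lia.
move=> w /eqP tau_t; split.
- by case: ytau_strategy => _ _; apply.
- rewrite -(Phi_ag_before_stop htau (eq_leq (esym tau_t))).
  have [_] := Y_solvent _ mtau t tT; move/(_ w).
  by rewrite /stop_indicator tau_t eqxx scale1r.
move=> s ts sT1; have [_] := Y_solvent _ mtau s sT1; move/(_ w).
by rewrite /stop_indicator tau_t ltn_eqF // scale0r subr0.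
Qed.

Lemma Phi_ag_Phi_ad : Phi_ad T F pi xi (Y chiT).
Proof.
split; first by case: hY => Y_strategy _ _; apply: Y_strategy mixed_chiT.
by move=> tau htau t tT; split; [apply: Phi_ag_continue | apply: Phi_ag_exercise].
Qed.

End AmericanToDeferred.

Definition Qset_witness t (z : Omega -> 'rV[R]_d) (u : nat -> Omega -> 'rV[R]_d) : Prop :=
  [/\ (forall s, (t < s)%N -> (s <= T.+1)%N -> meas (F s.-1) (u s)),
      (forall w, u T.+1 w = 0),
      Kset F pi t (fun w => z w - u t.+1 w) &
      (forall s, (t < s)%N -> (s <= T)%N -> Kset F pi s (fun w => u s w - u s.+1 w))].

Lemma Phi_ad_witnesses y : Phi_ad T F pi xi y ->
  exists U V : nat -> nat -> Omega -> 'rV[R]_d,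
    (forall r, (r <= T)%N -> Qset_witness r (fun w => y r w - xi r w) (U r)) /\
    (forall r, (r < T)%N -> Qset_witness r (fun w => y r w - y r.+1 w) (V r)).
Proof.
case=> _ hQ.
have /choice[U hU] r : exists u, (r <= T)%N -> Qset_witness r (fun w => y r w - xi r w) u.
  have [rT | Tr] := leqP r T; last by exists (fun _ _ => 0) => rT; lia.
  have [_ [_ [u hu]]] := hQ _ (stopping_time_cst hF rT) r rT.
  by exists u; rewrite eqxx in hu.
have /choice[V hV] r : exists v, (r < T)%N -> Qset_witness r (fun w => y r w - y r.+1 w) v.
  have [rT | Tr] := ltnP r T; last by exists (fun _ _ => 0) => rT; lia.
  have [[_ [v hv]] _] := hQ _ (stopping_time_cst hF (leqnn T)) r (ltnW rT).
  by exists v; rewrite rT in hv.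
by exists U, V.
Qed.

Section DeferredToAmerican.
Variable y : nat -> Omega -> 'rV[R]_d.
Hypothesis hy : strategy T F y.
Variables U V : nat -> nat -> Omega -> 'rV[R]_d.
Hypothesis hU : forall r, (r <= T)%N -> Qset_witness r (fun w => y r w - xi r w) (U r).
Hypothesis hV : forall r, (r < T)%N -> Qset_witness r (fun w => y r w - y r.+1 w) (V r).

Definition mixture (chi : nat -> Omega -> R) t w : 'rV[R]_d :=
  unexercised chi t w *: y t w
  + \sum_(r < t) (chi r w *: U r t w + unexercised chi r.+1 w *: V r t w).

Definition mixture_strategy chi t w : 'rV[R]_d := if (t <= T)%N then mixture chi t w else 0.

Lemma mixture0 chi w : mixture chi 0 w = y 0%N w.
Proof. by rewrite /mixture /unexercised !big_ord0 subr0 scale1r addr0. Qed.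

Lemma mixture_end chi w : mixed_stop T F chi -> mixture chi T.+1 w = 0.
Proof.
move=> mchi; have [_ _ y_end] := hy.
rewrite /mixture unexercised_end // scale0r add0r big1 // => r _.
have [_ U_end _ _] := hU (ltn_ord r); rewrite U_end scaler0 add0r.
have [rT | Tr] := ltnP r T; first by have [_ V_end _ _] := hV rT; rewrite V_end scaler0.
by rewrite (_ : r.+1 = T.+1) ?unexercised_end ?scale0r //; have := ltn_ord r; lia.
Qed.

Lemma mixture_strategyE chi t w : mixed_stop T F chi -> (t <= T.+1)%N ->
  mixture_strategy chi t w = mixture chi t w.
Proof.
move=> mchi tT; rewrite /mixture_strategy; case: leqP => // Tt.
by rewrite (_ : t = T.+1) ?mixture_end //; lia.
Qed.

Lemma mixture_measurable chi t k : mixed_stop T F chi ->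
  (t <= T)%N -> (t <= k.+1)%N -> (k <= T)%N -> measurable_in (F k) (mixture chi t).
Proof.
move=> mchi tT tk kT; have hFk := filtration_algebra hF kT.
have [chi_meas _ _ _] := mchi.
apply: (measurable_inD hFk).
  apply: (measurable_inZ hFk); first exact: unexercised_measurable.
  exact: (strategy_measurable hy).
apply: (measurable_in_sum hFk
  (X := fun r w => chi r w *: U r t w + unexercised chi r.+1 w *: V r t w)) => r rt.
apply: (measurable_inD hFk).
  apply: (measurable_inZ hFk).
    by apply: (measurable_in_filtration hF (s := r)); [lia | done | apply: chi_meas; lia].
  have [U_meas _ _ _] := hU (ltnW (leq_trans rt tT)).
  by apply: (measurable_in_filtration hF (s := t.-1)); [lia | done | apply: U_meas; lia].
apply: (measurable_inZ hFk); first by apply: unexercised_measurable => //; lia.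
have [V_meas _ _ _] := hV (leq_trans rt tT).
by apply: (measurable_in_filtration hF (s := t.-1)); [lia | done | apply: V_meas; lia].
Qed.

Lemma mixture_strategy_measurable chi t k : mixed_stop T F chi ->
  (t <= k.+1)%N -> (k <= T)%N -> measurable_in (F k) (mixture_strategy chi t).
Proof.
move=> mchi tk kT; rewrite /mixture_strategy; case: leqP => [tT | _].
  exact: mixture_measurable.
exact: (measurable_in_cst (filtration_algebra hF kT)).
Qed.

(* The mass chi_t exercised at t starts liquidating y_t - xi_t along U^t, the unexercised
   mass starts liquidating y_t - y_{t+1} along V^t, and the liquidations started earlier
   advance by one step. *)
Lemma mixture_step chi t w :
  mixture chi t w - chi t w *: xi t w - mixture chi t.+1 w =
    chi t w *: (y t w - xi t w - U t t.+1 w)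
  + unexercised chi t.+1 w *: (y t w - y t.+1 w - V t t.+1 w)
  + \sum_(r < t) (chi r w *: (U r t w - U r t.+1 w)
                  + unexercised chi r.+1 w *: (V r t w - V r t.+1 w)).
Proof.
rewrite /mixture big_ord_recr /= (unexercisedS chi t w).
rewrite [X in _ = _ + X](eq_bigr (fun r : 'I_t =>
    (chi r w *: U r t w + unexercised chi r.+1 w *: V r t w)
    - (chi r w *: U r t.+1 w + unexercised chi r.+1 w *: V r t.+1 w))); last first.
  by move=> r _; apply/rowP => j; rewrite !mxE; ring.
by rewrite sumrB; apply/rowP => j; rewrite !mxE; ring.
Qed.

Lemma mixture_solvent chi t w : mixed_stop T F chi -> (t <= T)%N ->
  in_solv_cone (pi t w) (mixture chi t w - chi t w *: xi t w - mixture chi t.+1 w).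
Proof.
move=> mchi tT; have chi_ge0 s := mixed_stop_ge0 s w mchi.
have c_ge0 s := unexercised_ge0 s w mchi.
rewrite mixture_step; apply: solv_coneD; first apply: solv_coneD.
- by apply: solv_coneZ => //; have [_ _ [_ ?] _] := hU tT.
- have [t_lt_T | Tt] := ltnP t T.
    by apply: solv_coneZ => //; have [_ _ [_ ?] _] := hV t_lt_T.
  by rewrite (_ : t = T) ?unexercised_end ?scale0r; [apply: solv_cone0 | | lia].
apply: solv_cone_sum => r; have rT : (r < T)%N by have := ltn_ord r; lia.
apply: solv_coneD; apply: solv_coneZ => //.
  by have [_ _ _ U_step] := hU (ltnW rT); have [_ ?] := U_step t (ltn_ord r) tT.
by have [_ _ _ V_step] := hV rT; have [_ ?] := V_step t (ltn_ord r) tT.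
Qed.

Lemma eq_mixture chi chi' t w : (forall s, (s < t)%N -> chi s w = chi' s w) ->
  mixture chi t w = mixture chi' t w.
Proof.
move=> e; rewrite /mixture (eq_unexercised e); congr (_ + _); apply: eq_bigr => r _.
rewrite e // (@eq_unexercised chi chi' r.+1) // => s sr.
by apply: e; have := ltn_ord r; lia.
Qed.

Lemma mixture_Phi_ag : Phi_ag T F pi xi mixture_strategy.
Proof.
split.
- move=> chi mchi; split.
  + by move=> w w'; rewrite !mixture_strategyE // !mixture0; case: hy => y0_cst _ _.
  + by move=> t t1 tT; apply: mixture_strategy_measurable => //; lia.
  + by move=> t w Tt; rewrite /mixture_strategy leqNgt Tt.
- move=> chi mchi t tT; have hFt := filtration_algebra hF tT; split.
    apply: (measurable_inB hFt); last exact: mixture_strategy_measurable.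
    apply: (measurable_inB hFt); first exact: mixture_strategy_measurable.
    by apply: (measurable_inZ hFt); [case: mchi => chi_meas _ _ _; apply: chi_meas | apply: hxi].
  by move=> w; rewrite !mixture_strategyE //; [apply: mixture_solvent | lia].
- move=> chi chi' mchi mchi' t w tT e; rewrite /mixture_strategy.
  by case: ifP => // _; apply: eq_mixture.
Qed.

End DeferredToAmerican.

End Model.

Theorem proposition4p4 (R : realType) (Omega : finType) (d T : nat)
  (F : nat -> {set {set Omega}}) (P : Omega -> R)
  (pi : nat -> Omega -> 'I_d -> 'I_d -> R)
  (xi : nat -> Omega -> 'rV[R]_d)
  (hF : filtration T F) (hP : full_support_prob P)
  (hpi : exchange_rates T F pi) (hNA : no_arbitrage T F pi)
  (hxi : adapted T F xi) :
  forall x : 'rV[R]_d,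
    (exists Y, Phi_ag T F pi xi Y /\
       forall chi, mixed_stop T F chi -> forall w, Y chi 0%N w = x)
    <->
    (exists y, Phi_ad T F pi xi y /\ forall w, y 0%N w = x).
Proof.
move=> x; split.
- case=> Y [hY Y0]; exists (Y (stop_indicator R (fun=> T))).
  split; first exact: (Phi_ag_Phi_ad hF hxi hY).
  by apply: Y0; apply: (mixed_stop_indicator R hF); apply: stopping_time_cst.
- case=> y [hy y0]; have [U [V [hU hV]]] := Phi_ad_witnesses hF hy.
  exists (mixture_strategy T y U V); split; first exact: (mixture_Phi_ag hF hxi hy.1 hU hV).
  by move=> chi mchi w; rewrite (mixture_strategyE hy.1 hU hV) // mixture0.
Qed.
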